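(* For every set of formulas $\Gamma\cup\{\varphi\}\subseteq For$: $\Gamma \vdash_{\bf Dm} \varphi$ if and only if there exists a set of formulas $\Upsilon$ such that $\Gamma\cup\{\circ \delta \ : \ \delta \in \Upsilon\} \vdash_{\bf Km} \varphi$, where $\circ\delta:=\Box\delta\to\Diamond\delta$.
   Context: Formulas are built from a denumerable set of propositional variables by the unary connectives $\neg$, $\Box$ and the binary connective $\to$; $For$ is the set of all formulas. Abbreviations: $\Diamond\alpha:=\neg\Box\neg\alpha$, $\alpha\vee\beta:=\neg\alpha\to\beta$, $\alpha\wedge\beta:=\neg(\alpha\to\neg\beta)$. All Hilbert calculi below have as axioms all instances (over $For$) of the axiom schemas of a standard Hilbert calculus for classical propositional logic in the signature $\{\neg,\to\}$, plus the listed modal schemas, with modus ponens as the only rule; $\Gamma\vdash_{\bf L}\alpha$ means there is a derivation of $\alpha$ from $\Gamma$ in ${\bf L}$. ${\bf Km}$: (K') $\Diamond\alpha\to(\Box(\alpha\to\beta)\to(\Box\alpha\to\Box\beta))$; (K1') $\Diamond\neg\beta\to(\Box(\alpha\to\beta)\to(\Diamond\alpha\to\Diamond\beta))$; (K2') $\Diamond\alpha\to(\Diamond(\alpha\to\beta)\to(\Box\alpha\to\Diamond\beta))$; (M3') $(\Diamond\alpha\vee\Diamond\neg\alpha)\to(\Diamond\beta\to\Diamond(\alpha\to\beta))$; (M4') $\Diamond\neg\beta\to(\Diamond\neg\alpha\to\Diamond(\alpha\to\beta))$; (I1) $(\Box\alpha\wedge\Box\neg\alpha)\to(\Box(\alpha\to\beta)\wedge\Box\neg(\alpha\to\beta))$;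 (I2) $(\Box\beta\wedge\Box\neg\beta)\to(\Box(\alpha\to\beta)\wedge\Box\neg(\alpha\to\beta))$; (M1) $\neg\Diamond\alpha\to\Box(\alpha\to\beta)$; (M2) $\Box\beta\to\Box(\alpha\to\beta)$; (DN1) $\Box\alpha\to\Box\neg\neg\alpha$; (DN2) $\Box\neg\neg\alpha\to\Box\alpha$. ${\bf Dm}$: (K) $\Box(\alpha\to\beta)\to(\Box\alpha\to\Box\beta)$; (K1) $\Box(\alpha\to\beta)\to(\Diamond\alpha\to\Diamond\beta)$; (K2) $\Diamond(\alpha\to\beta)\to(\Box\alpha\to\Diamond\beta)$; (M1); (M2); (M3) $\Diamond\beta\to\Diamond(\alpha\to\beta)$; (M4) $\Diamond\neg\alpha\to\Diamond(\alpha\to\beta)$; (DN1); (DN2); (D) $\Box\alpha\to\Diamond\alpha$. *)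

Inductive form : Type :=
| Var : nat -> form
| Neg : form -> form
| Box : form -> form
| Imp : form -> form -> form.

Definition Dia (a : form) : form := Neg (Box (Neg a)).
Definition Or (a b : form) : form := Imp (Neg a) b.
Definition And (a b : form) : form := Neg (Imp a (Neg b)).

Definition circ (d : form) : form := Imp (Box d) (Dia d).

Definition fset := form -> Prop.

(* A standard Hilbert calculus for classical propositional logic in {neg, imp}
   (Mendelson's axioms), instances over all formulas. *)
Inductive cpl_axiom : form -> Prop :=
| CA1 : forall a b, cpl_axiom (Imp a (Imp b a))
| CA2 : forall a b c,
    cpl_axiom (Imp (Imp a (Imp b c)) (Imp (Imp a b) (Imp a c)))
| CA3 : forall a b,
    cpl_axiom (Imp (Imp (Neg b) (Neg a)) (Imp (Imp (Neg b) a) b)).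

Inductive km_axiom : form -> Prop :=
| Kp : forall a b, km_axiom (Imp (Dia a) (Imp (Box (Imp a b)) (Imp (Box a) (Box b))))
| K1p : forall a b, km_axiom (Imp (Dia (Neg b)) (Imp (Box (Imp a b)) (Imp (Dia a) (Dia b))))
| K2p : forall a b, km_axiom (Imp (Dia a) (Imp (Dia (Imp a b)) (Imp (Box a) (Dia b))))
| M3p : forall a b, km_axiom (Imp (Or (Dia a) (Dia (Neg a))) (Imp (Dia b) (Dia (Imp a b))))
| M4p : forall a b, km_axiom (Imp (Dia (Neg b)) (Imp (Dia (Neg a)) (Dia (Imp a b))))
| I1 : forall a b, km_axiom (Imp (And (Box a) (Box (Neg a)))
                                 (And (Box (Imp a b)) (Box (Neg (Imp a b)))))
| I2 : forall a b, km_axiom (Imp (And (Box b) (Box (Neg b)))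
                                 (And (Box (Imp a b)) (Box (Neg (Imp a b)))))
| KmM1 : forall a b, km_axiom (Imp (Neg (Dia a)) (Box (Imp a b)))
| KmM2 : forall a b, km_axiom (Imp (Box b) (Box (Imp a b)))
| KmDN1 : forall a, km_axiom (Imp (Box a) (Box (Neg (Neg a))))
| KmDN2 : forall a, km_axiom (Imp (Box (Neg (Neg a))) (Box a)).

Inductive dm_axiom : form -> Prop :=
| K : forall a b, dm_axiom (Imp (Box (Imp a b)) (Imp (Box a) (Box b)))
| K1 : forall a b, dm_axiom (Imp (Box (Imp a b)) (Imp (Dia a) (Dia b)))
| K2 : forall a b, dm_axiom (Imp (Dia (Imp a b)) (Imp (Box a) (Dia b)))
| DmM1 : forall a b, dm_axiom (Imp (Neg (Dia a)) (Box (Imp a b)))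
| DmM2 : forall a b, dm_axiom (Imp (Box b) (Box (Imp a b)))
| M3 : forall a b, dm_axiom (Imp (Dia b) (Dia (Imp a b)))
| M4 : forall a b, dm_axiom (Imp (Dia (Neg a)) (Dia (Imp a b)))
| DmDN1 : forall a, dm_axiom (Imp (Box a) (Box (Neg (Neg a))))
| DmDN2 : forall a, dm_axiom (Imp (Box (Neg (Neg a))) (Box a))
| D : forall a, dm_axiom (Imp (Box a) (Dia a)).

Inductive derives (Ax : form -> Prop) (G : fset) : form -> Prop :=
| d_hyp : forall a, G a -> derives Ax G a
| d_cpl : forall a, cpl_axiom a -> derives Ax G a
| d_ax : forall a, Ax a -> derives Ax G a
| d_mp : forall a b, derives Ax G a -> derives Ax G (Imp a b) -> derives Ax G b.

Definition derives_Km := derives km_axiom.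
Definition derives_Dm := derives dm_axiom.


(* The Km axioms are Dm axioms guarded by extra antecedents (◇α, ◇¬β, ...),
   except I1 and I2, whose antecedent □α ∧ □¬α is refuted by D; so Km ⊆ Dm,
   and each premise ∘δ is itself the D instance □δ → ◇δ.  Conversely, once all
   formulas ∘δ are premises, D is available in Km and the guards can be
   discharged: a guard ◇α next to □α follows by ∘, and a guard ◇¬β is handled
   by cases, since ¬◇¬β yields □β by DN2 and then ◇β (or ◇(α → β), after M2)
   by ∘. *)

Definition ext (G : fset) (a : form) : fset := fun f => G f \/ f = a.

Definition circs : fset := fun f => exists d, f = circ d.

Lemma derives_transfer (Ax Ax' : form -> Prop) (G G' : fset) a :
  (forall b, Ax b -> derives Ax' G' b) ->
  (forall b, G b -> derives Ax' G' b) ->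
  derives Ax G a -> derives Ax' G' a.
Proof.
  intros HAx HG H; induction H as [c Hc | c Hc | c Hc | c d _ IHc _ IHcd].
  - apply HG; assumption.
  - apply d_cpl; assumption.
  - apply HAx; assumption.
  - exact (d_mp _ _ _ _ IHc IHcd).
Qed.

Section Classical.

Variable Ax : form -> Prop.

Lemma derives_mono (G G' : fset) a :
  (forall f, G f -> G' f) -> derives Ax G a -> derives Ax G' a.
Proof.
  intros HG; apply derives_transfer.
  - intros; apply d_ax; assumption.
  - intros; apply d_hyp, HG; assumption.
Qed.

Lemma derives_ext G x a : derives Ax G a -> derives Ax (ext G x) a.
Proof. apply derives_mono; unfold ext; auto. Qed.

Lemma derives_mp G a b : derives Ax G (Imp a b) -> derives Ax G a -> derives Ax G b.
Proof. intros Hab Ha; exact (d_mp _ _ _ _ Ha Hab). Qed.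

Lemma derives_cpl_mp2 G x y z :
  cpl_axiom (Imp x (Imp y z)) -> derives Ax G x -> derives Ax G y -> derives Ax G z.
Proof.
  intros HA Hx Hy; apply (derives_mp _ y); [apply (derives_mp _ x)|]; auto.
  apply d_cpl; assumption.
Qed.

Lemma derives_weaken_imp G a b : derives Ax G a -> derives Ax G (Imp b a).
Proof. apply derives_mp, d_cpl, CA1. Qed.

Lemma derives_imp_refl G a : derives Ax G (Imp a a).
Proof.
  apply (derives_cpl_mp2 _ (Imp a (Imp (Imp a a) a)) (Imp a (Imp a a))).
  - apply CA2.
  - apply d_cpl, CA1.
  - apply d_cpl, CA1.
Qed.

Lemma deduction G a b : derives Ax (ext G a) b -> derives Ax G (Imp a b).
Proof.
  intros H; induction H as [c [Hc | ->] | c Hc | c Hc | c d _ IHc _ IHcd].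
  - apply derives_weaken_imp, d_hyp; assumption.
  - apply derives_imp_refl.
  - apply derives_weaken_imp, d_cpl; assumption.
  - apply derives_weaken_imp, d_ax; assumption.
  - apply (derives_cpl_mp2 _ _ _ _ (CA2 a c d)); assumption.
Qed.

Lemma derives_explosion G a b : derives Ax G (Neg a) -> derives Ax G a -> derives Ax G b.
Proof.
  intros Hna Ha.
  apply (derives_cpl_mp2 _ _ _ _ (CA3 a b)); apply derives_weaken_imp; assumption.
Qed.

Lemma derives_by_contradiction G a b :
  derives Ax (ext G (Neg a)) b -> derives Ax (ext G (Neg a)) (Neg b) -> derives Ax G a.
Proof.
  intros Hb Hnb.
  apply (derives_cpl_mp2 _ _ _ _ (CA3 b a)); apply deduction; assumption.
Qed.

Lemma derives_dne G a : derives Ax G (Neg (Neg a)) -> derives Ax G a.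
Proof.
  intros H.
  apply (derives_cpl_mp2 _ _ _ _ (CA3 (Neg a) a)).
  - apply derives_weaken_imp; assumption.
  - apply derives_imp_refl.
Qed.

Lemma derives_by_cases G a c :
  derives Ax (ext G a) c -> derives Ax (ext G (Neg a)) c -> derives Ax G c.
Proof.
  intros Ha Hna; apply deduction in Ha; apply deduction in Hna.
  apply (derives_by_contradiction _ _ c); [| apply d_hyp; right; reflexivity].
  apply (derives_mp _ (Neg a)); [apply derives_ext; assumption |].
  apply (derives_by_contradiction _ _ c).
  - apply (derives_mp _ a); [do 2 apply derives_ext; assumption |].
    apply derives_dne, d_hyp; right; reflexivity.
  - apply d_hyp; left; right; reflexivity.
Qed.

End Classical.

Ltac in_premises := unfold ext, circs; eauto 10.
Ltac hyp := apply d_hyp; in_premises.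

Lemma derives_Dia_of_Box Ax (G : fset) d :
  G (circ d) -> derives Ax G (Box d) -> derives Ax G (Dia d).
Proof. intros Hc Hb; apply (derives_mp _ _ (Box d)); [apply d_hyp|]; assumption. Qed.

Lemma derives_Box_of_not_Dia_Neg G b :
  derives km_axiom G (Neg (Dia (Neg b))) -> derives km_axiom G (Box b).
Proof.
  intros H; apply (derives_mp _ _ (Box (Neg (Neg b)))).
  - apply d_ax, KmDN2.
  - apply derives_dne; assumption.
Qed.

Lemma Km_circs_derives_Dm_axiom a : dm_axiom a -> derives km_axiom circs a.
Proof.
  intros H; destruct H as [a b|a b|a b|a b|a b|a b|a b|a|a|a].
  - apply deduction, deduction.
    apply (derives_mp _ _ (Box a)); [| hyp].
    apply (derives_mp _ _ (Box (Imp a b))); [| hyp].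
    apply (derives_mp _ _ (Dia a)); [apply d_ax, Kp |].
    apply derives_Dia_of_Box; [in_premises | hyp].
  - apply deduction, deduction, (derives_by_cases _ _ (Dia (Neg b))).
    + apply (derives_mp _ _ (Dia a)); [| hyp].
      apply (derives_mp _ _ (Box (Imp a b))); [| hyp].
      apply (derives_mp _ _ (Dia (Neg b))); [apply d_ax, K1p | hyp].
    + apply derives_Dia_of_Box; [in_premises |].
      apply derives_Box_of_not_Dia_Neg; hyp.
  - apply deduction, deduction.
    apply (derives_mp _ _ (Box a)); [| hyp].
    apply (derives_mp _ _ (Dia (Imp a b))); [| hyp].
    apply (derives_mp _ _ (Dia a)); [apply d_ax, K2p |].
    apply derives_Dia_of_Box; [in_premises | hyp].
  - apply d_ax, KmM1.
  - apply d_ax, KmM2.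
  - apply deduction.
    apply (derives_mp _ _ (Dia b)); [| hyp].
    apply (derives_mp _ _ (Or (Dia a) (Dia (Neg a)))); [apply d_ax, M3p |].
    apply deduction, derives_Dia_of_Box; [in_premises |].
    apply derives_dne; hyp.
  - apply deduction, (derives_by_cases _ _ (Dia (Neg b))).
    + apply (derives_mp _ _ (Dia (Neg a))); [| hyp].
      apply (derives_mp _ _ (Dia (Neg b))); [apply d_ax, M4p | hyp].
    + apply derives_Dia_of_Box; [in_premises |].
      apply (derives_mp _ _ (Box b)); [apply d_ax, KmM2 |].
      apply derives_Box_of_not_Dia_Neg; hyp.
  - apply d_ax, KmDN1.
  - apply d_ax, KmDN2.
  - apply d_hyp; exists a; reflexivity.
Qed.

Lemma Dm_derives_Km_axiom G a : km_axiom a -> derives dm_axiom G a.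
Proof.
  intros H; destruct H as [a b|a b|a b|a b|a b|a b|a b|a b|a b|a|a].
  all: try (apply d_ax; constructor).
  1-5: apply deduction, derives_ext, d_ax; constructor.
  (* □α ∧ □¬α unfolds to ¬(□α → ◇α), the negation of an instance of D. *)
  - apply deduction, (derives_explosion _ _ (Imp (Box a) (Dia a))); [hyp | apply d_ax, D].
  - apply deduction, (derives_explosion _ _ (Imp (Box b) (Dia b))); [hyp | apply d_ax, D].
Qed.

Theorem mainTheorem3 : forall (Gamma : form -> Prop) (phi : form),
  derives_Dm Gamma phi <->
  exists Upsilon : form -> Prop,
    derives_Km (fun f => Gamma f \/ exists d, Upsilon d /\ f = circ d) phi.
Proof.
  intros Gamma phi; unfold derives_Dm, derives_Km; split.
  - intros H; exists (fun _ => True); revert H.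
    apply derives_transfer; [| intros; hyp].
    intros b Hb; eapply derives_mono; [| apply Km_circs_derives_Dm_axiom, Hb].
    intros f [d ->]; eauto.
  - intros [Upsilon H]; revert H; apply derives_transfer.
    + apply Dm_derives_Km_axiom.
    + intros b [Hb | [d [_ ->]]]; [hyp | apply d_ax, D].
Qed.
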